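(* Let $\{G^k\}$ be a $B$-strongly connected sequence of digraphs on $\{1,\dots,I\}$, let each $\mathbf{A}^k$ be compliant with $G^k$ (constant $\kappa>0$) and column stochastic, and let $\{\mathbf{u}_i^k\}_{k\ge0}\subset\mathbb{R}^m$, $i=1,\dots,I$, be signals. Consider the tracking protocol with $\phi_{(i)}^0=1$, $\mathbf{x}_{(i)}^0=\mathbf{u}_i^0$ and $$\phi_{(i)}^{k+1}=\sum_ja_{ij}^k\phi_{(j)}^k,\quad \mathbf{x}_{(i)}^{k+1}=\frac{1}{\phi_{(i)}^{k+1}}\sum_ja_{ij}^k\phi_{(j)}^k\mathbf{x}_{(j)}^k+\frac{1}{\phi_{(i)}^{k+1}}(\mathbf{u}_i^{k+1}-\mathbf{u}_i^k).$$ Then (a) $\sum_{i=1}^I\phi_{(i)}^k\mathbf{x}_{(i)}^k=\sum_{i=1}^I\mathbf{u}_i^k$ for all $k$; (b) if moreover $\lim_{k\to\infty}\|\mathbf{u}_i^{k+1}-\mathbf{u}_i^k\|=0$ for all $i$, then $\lim_{k\to\infty}\|\mathbf{x}_{(i)}^k-\bar{\mathbf{u}}^k\|=0$ for all $i$, where $\bar{\mathbf{u}}^k\triangleq\frac1I\sum_{i=1}^I\mathbf{u}_i^k$.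
   Context: A digraph at time $k$ is $G^k=(V,E^k)$, $V=\{1,\dots,I\}$, with edge $(j,i)\in E^k$ meaning $j$ can send to $i$. The sequence is $B$-strongly connected if there is an integer $B>0$ such that for every $k$ the digraph with edge set $\bigcup_{t=k}^{k+B-1}E^t$ is strongly connected. $\mathbf{A}^k$ is compliant with $G^k$ (constant $\kappa>0$) if $a_{ij}^k=0$ whenever $j\ne i$ and $(j,i)\notin E^k$, $a_{ij}^k\ge\kappa$ whenever $(j,i)\in E^k$, and $a_{ii}^k\ge\kappa$; it is column stochastic if its entries are nonnegative and $\mathbf{1}^T\mathbf{A}^k=\mathbf{1}^T$. *)

From Stdlib Require Import Reals.
Open Scope R_scope.

(* Vertices are 0..I-1 (paper: 1..I).  Vectors in R^m are functions
   nat -> R, only coordinates 0..m-1 matter. *)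

Fixpoint rsum (n : nat) (f : nat -> R) : R :=
  match n with
  | O => 0
  | S n' => rsum n' f + f n'
  end.

Definition vnorm (m : nat) (v : nat -> R) : R :=
  sqrt (rsum m (fun c => v c * v c)).

(* A time-varying digraph: E k j i  means (j,i) in E^k, j can send to i. *)
Definition digraph_seq := nat -> nat -> nat -> Prop.

Inductive reach (I : nat) (e : nat -> nat -> Prop) : nat -> nat -> Prop :=
  | reach_refl : forall a, (a < I)%nat -> reach I e a a
  | reach_step : forall a b c, reach I e a b -> (c < I)%nat -> e b c ->
                 reach I e a c.

Definition strongly_connected (I : nat) (e : nat -> nat -> Prop) : Prop :=
  forall a b, (a < I)%nat -> (b < I)%nat -> reach I e a b.

Definition B_strongly_connected (I : nat) (E : digraph_seq) : Prop :=
  exists B : nat, (0 < B)%nat /\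
    forall k : nat,
      strongly_connected I
        (fun j i => exists t, (k <= t <= k + B - 1)%nat /\ E t j i).

(* A k i j = a_ij^k *)
Definition compliant (I : nat) (kappa : R) (E : digraph_seq)
    (A : nat -> nat -> nat -> R) (k : nat) : Prop :=
  (forall i j, (i < I)%nat -> (j < I)%nat -> j <> i -> ~ E k j i -> A k i j = 0) /\
  (forall i j, (i < I)%nat -> (j < I)%nat -> E k j i -> A k i j >= kappa) /\
  (forall i, (i < I)%nat -> A k i i >= kappa).

Definition column_stochastic (I : nat) (A : nat -> nat -> nat -> R) (k : nat) : Prop :=
  (forall i j, (i < I)%nat -> (j < I)%nat -> 0 <= A k i j) /\
  (forall j, (j < I)%nat -> rsum I (fun i => A k i j) = 1).

From Stdlib Require Import Reals Lra Lia.
Open Scope R_scope.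

(** Part (a) is conservation of mass: the columns of [A^k] sum to one, so
    [sum_i phi_i x_i] changes exactly by [sum_i (u_i^{k+1} - u_i^k)].

    For (b), with [W_ij^k = a_ij^k phi_j^k / phi_i^{k+1}] the update reads
    [x^{k+1} = W^k x^k + e^k], where [W^k] is row stochastic and
    [e_i^k = (u_i^{k+1} - u_i^k) / phi_i^{k+1}].  As every window of [B] steps
    is strongly connected, positive mass at one node reaches all nodes within
    [I B] steps, losing at most a factor [alpha^(I B)] when the entries along
    edges are at least [alpha].  This bounds [phi] below by [kappa^(I B)], so
    that [e^k -> 0] and the entries of [W^k] along edges are bounded below; it
    also makes the spread [max_i x_i - min_i x_i] contract by a fixed factor
    over every [I B] steps, up to the accumulated perturbation, so the spread
    tends to 0.  Finally, by (a) the average of the [u_i^k] is a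
    [phi]-weighted average of the [x_i^k], hence lies within their spread. *)

Lemma rsum_ext n f g : (forall j, (j < n)%nat -> f j = g j) -> rsum n f = rsum n g.
Proof.
  induction n as [|n IH]; intros Hfg; simpl; [reflexivity|].
  rewrite IH by (intros; apply Hfg; lia). rewrite Hfg by lia. reflexivity.
Qed.

Lemma rsum_le n f g : (forall j, (j < n)%nat -> f j <= g j) -> rsum n f <= rsum n g.
Proof.
  induction n as [|n IH]; intros Hfg; simpl; [lra|].
  assert (rsum n f <= rsum n g) by (apply IH; intros; apply Hfg; lia).
  assert (f n <= g n) by (apply Hfg; lia). lra.
Qed.

Lemma rsum_add n f g : rsum n (fun j => f j + g j) = rsum n f + rsum n g.
Proof. induction n as [|n IH]; simpl; [|rewrite IH]; lra. Qed.

Lemma rsum_scal n r f : rsum n (fun j => r * f j) = r * rsum n f.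
Proof. induction n as [|n IH]; simpl; [|rewrite IH]; lra. Qed.

Lemma rsum_opp n f : rsum n (fun j => - f j) = - rsum n f.
Proof. induction n as [|n IH]; simpl; [|rewrite IH]; lra. Qed.

Lemma rsum_const n a : rsum n (fun _ => a) = INR n * a.
Proof. induction n as [|n IH]; simpl rsum; [simpl; lra|]. rewrite IH, S_INR. lra. Qed.

Lemma rsum_swap n p (f : nat -> nat -> R) :
  rsum n (fun i => rsum p (fun j => f i j)) = rsum p (fun j => rsum n (fun i => f i j)).
Proof.
  induction n as [|n IH]; simpl.
  - rewrite rsum_const. lra.
  - rewrite IH, <- rsum_add. reflexivity.
Qed.

Lemma rsum_nonneg n f : (forall j, (j < n)%nat -> 0 <= f j) -> 0 <= rsum n f.
Proof. intros Hf. rewrite <- (Rmult_0_r (INR n)), <- rsum_const. apply rsum_le. exact Hf. Qed.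

Lemma rsum_term_le n f j :
  (forall j, (j < n)%nat -> 0 <= f j) -> (j < n)%nat -> f j <= rsum n f.
Proof.
  induction n as [|n IH]; simpl; intros Hf Hj; [lia|].
  assert (0 <= rsum n f) by (apply rsum_nonneg; intros; apply Hf; lia).
  destruct (Nat.eq_dec j n) as [->|Hjn]; [lra|].
  assert (f j <= rsum n f) by (apply IH; [intros; apply Hf|]; lia).
  assert (0 <= f n) by (apply Hf; lia). lra.
Qed.

Lemma rsum_le_prefix r n f : (r <= n)%nat -> (forall j, 0 <= f j) -> rsum r f <= rsum n f.
Proof.
  intros Hrn Hf. induction Hrn as [|n Hrn IH]; simpl; [lra|].
  pose proof (Hf n). lra.
Qed.

Lemma weighted_average_between n (w f : nat -> R) (L U : R) :
  (0 < rsum n w) -> (forall j, (j < n)%nat -> 0 <= w j) ->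
  (forall j, (j < n)%nat -> L <= f j <= U) ->
  L <= / rsum n w * rsum n (fun j => w j * f j) <= U.
Proof.
  intros Hw Hw0 Hf.
  assert (Hlow : L * rsum n w <= rsum n (fun j => w j * f j)).
  { rewrite <- rsum_scal. apply rsum_le. intros j Hj.
    specialize (Hf j Hj). specialize (Hw0 j Hj). nra. }
  assert (Hup : rsum n (fun j => w j * f j) <= U * rsum n w).
  { rewrite <- rsum_scal. apply rsum_le. intros j Hj.
    specialize (Hf j Hj). specialize (Hw0 j Hj). nra. }
  split.
  - apply (Rmult_le_reg_l (rsum n w)); [exact Hw|].
    rewrite <- Rmult_assoc, Rinv_r by lra. lra.
  - apply (Rmult_le_reg_l (rsum n w)); [exact Hw|].
    rewrite <- Rmult_assoc, Rinv_r by lra. lra.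
Qed.

Fixpoint max_upto (n : nat) (f : nat -> R) : R :=
  match n with O => f O | S n' => Rmax (max_upto n' f) (f n) end.

Fixpoint min_upto (n : nat) (f : nat -> R) : R :=
  match n with O => f O | S n' => Rmin (min_upto n' f) (f n) end.

Lemma le_max_upto n f j : (j <= n)%nat -> f j <= max_upto n f.
Proof.
  induction n as [|n IH]; simpl; intros Hj.
  - replace j with O by lia. lra.
  - destruct (Nat.eq_dec j (S n)) as [->|Hjn]; [apply Rmax_r|].
    eapply Rle_trans; [apply IH; lia|apply Rmax_l].
Qed.

Lemma min_upto_le n f j : (j <= n)%nat -> min_upto n f <= f j.
Proof.
  induction n as [|n IH]; simpl; intros Hj.
  - replace j with O by lia. lra.
  - destruct (Nat.eq_dec j (S n)) as [->|Hjn]; [apply Rmin_r|].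
    eapply Rle_trans; [apply Rmin_l|apply IH; lia].
Qed.

Lemma max_upto_attained n f : exists j, (j <= n)%nat /\ max_upto n f = f j.
Proof.
  induction n as [|n [j [Hj Ej]]]; simpl; [exists O; auto|].
  unfold Rmax. destruct (Rle_dec (max_upto n f) (f (S n))).
  - exists (S n). auto.
  - exists j. split; [lia|exact Ej].
Qed.

Lemma min_upto_attained n f : exists j, (j <= n)%nat /\ min_upto n f = f j.
Proof.
  induction n as [|n [j [Hj Ej]]]; simpl; [exists O; auto|].
  unfold Rmin. destruct (Rle_dec (min_upto n f) (f (S n))).
  - exists j. split; [lia|exact Ej].
  - exists (S n). auto.
Qed.

Fixpoint count_true (n : nat) (p : nat -> bool) : nat :=
  match n with O => O | S n' => (count_true n' p + if p n' then 1 else 0)%nat end.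

Lemma count_true_mono n p q :
  (forall i, (i < n)%nat -> p i = true -> q i = true) -> (count_true n p <= count_true n q)%nat.
Proof.
  induction n as [|n IH]; simpl; intros Hpq; [lia|].
  assert (count_true n p <= count_true n q)%nat by (apply IH; intros; apply Hpq; auto; lia).
  destruct (p n) eqn:Hp; [rewrite (Hpq n) by auto; lia|destruct (q n); lia].
Qed.

Lemma count_true_strict n p q i :
  (forall i, (i < n)%nat -> p i = true -> q i = true) ->
  (i < n)%nat -> p i = false -> q i = true ->
  (count_true n p < count_true n q)%nat.
Proof.
  induction n as [|n IH]; simpl; intros Hpq Hi Hp Hq; [lia|].
  destruct (Nat.eq_dec i n) as [->|Hin].
  - rewrite Hp, Hq.
    assert (count_true n p <= count_true n q)%nat
      by (apply count_true_mono; intros; apply Hpq; auto; lia).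
    lia.
  - assert (count_true n p < count_true n q)%nat by (apply IH; [intros; apply Hpq; auto; lia|lia|auto|auto]).
    destruct (p n) eqn:Hpn; [rewrite (Hpq n) by auto; lia|destruct (q n); lia].
Qed.

Lemma count_true_lt n p : (count_true n p < n)%nat -> exists i, (i < n)%nat /\ p i = false.
Proof.
  induction n as [|n IH]; simpl; intros Hlt; [lia|].
  destruct (p n) eqn:Hpn.
  - destruct IH as [i [Hi Hpi]]; [lia|]. exists i. split; [lia|exact Hpi].
  - exists n. auto.
Qed.

Lemma count_true_full n p : (n <= count_true n p)%nat -> forall i, (i < n)%nat -> p i = true.
Proof.
  intros Hn i Hi. destruct (p i) eqn:Hpi; [reflexivity|].
  assert (count_true n p < count_true n (fun _ => true))%nat
    by (apply (count_true_strict _ _ _ i); auto).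
  assert (count_true n (fun _ => true) <= n)%nat
    by (clear; induction n; simpl; lia).
  lia.
Qed.

Lemma reach_target_lt I e a b : reach I e a b -> (b < I)%nat.
Proof. induction 1; assumption. Qed.

Lemma reach_mono I (e e' : nat -> nat -> Prop) a b :
  (forall j i, e j i -> e' j i) -> reach I e a b -> reach I e' a b.
Proof.
  intros Hee'. induction 1 as [a Ha|a b c _ IH Hc Hbc].
  - apply reach_refl, Ha.
  - apply (reach_step I e' a b c IH Hc (Hee' _ _ Hbc)).
Qed.

Lemma reach_exit_edge I e (p : nat -> bool) a b :
  reach I e a b -> p a = true -> p b = false ->
  exists j i, (j < I)%nat /\ (i < I)%nat /\ p j = true /\ p i = false /\ e j i.
Proof.
  induction 1 as [a Ha|a b c Hab IH Hc Hbc]; intros Hpa Hpc; [congruence|].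
  destruct (p b) eqn:Hpb.
  - exists b, c. repeat split; auto. eapply reach_target_lt; eauto.
  - apply IH; auto.
Qed.

Definition window_union (E : digraph_seq) (B k : nat) : nat -> nat -> Prop :=
  fun j i => exists t, (k <= t <= k + B - 1)%nat /\ E t j i.

Lemma window_union_shift I E B k0 n :
  strongly_connected I (window_union E B (k0 + n)) ->
  strongly_connected I (window_union (fun t => E (k0 + t)%nat) B n).
Proof.
  intros Hsc a b Ha Hb. apply (reach_mono I (window_union E B (k0 + n))); [|apply Hsc; auto].
  intros j i [t [Ht Et]]. exists (t - k0)%nat. split; [lia|].
  replace (k0 + (t - k0))%nat with t by lia. exact Et.
Qed.

Section Propagation.
Variables (I : nat) (E : digraph_seq) (M : nat -> nat -> nat -> R) (c : nat -> nat -> R) (al : R).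
Hypothesis al_ge0 : 0 <= al.
Hypothesis M_ge0 : forall t i j, (i < I)%nat -> (j < I)%nat -> 0 <= M t i j.
Hypothesis M_diag : forall t i, (i < I)%nat -> al <= M t i i.
Hypothesis M_edge : forall t i j, (i < I)%nat -> (j < I)%nat -> E t j i -> al <= M t i j.
Hypothesis c_ge0 : forall t i, (i < I)%nat -> 0 <= c t i.
Hypothesis c_succ : forall t i, (i < I)%nat -> c (S t) i = rsum I (fun j => M t i j * c t j).

Lemma propagate_edge t j i :
  (i < I)%nat -> (j < I)%nat -> j = i \/ E t j i -> al * c t j <= c (S t) i.
Proof.
  intros Hi Hj Hji. rewrite c_succ by exact Hi.
  apply Rle_trans with (M t i j * c t j).
  - apply Rmult_le_compat_r; [auto|]. destruct Hji as [<-|Hji]; auto.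
  - apply (rsum_term_le I (fun j => M t i j * c t j)); [|exact Hj].
    intros; apply Rmult_le_pos; auto.
Qed.

Lemma propagate_stay t r i : (i < I)%nat -> al ^ r * c t i <= c (t + r) i.
Proof.
  intros Hi. induction r as [|r IH]; simpl.
  - rewrite Nat.add_0_r. lra.
  - rewrite Nat.add_succ_r.
    apply Rle_trans with (al * c (t + r)%nat i); [|apply propagate_edge; auto].
    rewrite Rmult_assoc. apply Rmult_le_compat_l; auto.
Qed.

Variables (B j0 : nat).
Hypothesis B_pos : (0 < B)%nat.
Hypothesis windows_connected : forall k, strongly_connected I (window_union E B k).
Hypothesis j0_lt : (j0 < I)%nat.

Let reached t i : bool := if Rle_dec (al ^ t * c 0 j0) (c t i) then true else false.

Let reached_spec t i : reached t i = true <-> al ^ t * c 0 j0 <= c t i.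
Proof. unfold reached. destruct (Rle_dec _ _); split; auto; discriminate. Qed.

Let reached_later t r i : (i < I)%nat -> reached t i = true -> reached (t + r) i = true.
Proof.
  rewrite !reached_spec. intros Hi Hti. rewrite pow_add.
  apply Rle_trans with (al ^ r * c t i); [|apply propagate_stay; exact Hi].
  replace (al ^ t * al ^ r * c 0 j0) with (al ^ r * (al ^ t * c 0 j0)) by ring.
  apply Rmult_le_compat_l; [apply pow_le|]; assumption.
Qed.

Let reached_edge t j i :
  (i < I)%nat -> (j < I)%nat -> E t j i -> reached t j = true -> reached (S t) i = true.
Proof.
  rewrite !reached_spec. intros Hi Hj Et Htj. simpl. rewrite Rmult_assoc.
  apply Rle_trans with (al * c t j); [|apply propagate_edge; auto].
  apply Rmult_le_compat_l; auto.
Qed.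

(* Strong connectivity of each window adds at least one reached node per window. *)
Let reached_count n : (Nat.min I (S n) <= count_true I (reached (n * B)))%nat.
Proof.
  assert (Hj0 : forall n, reached (n * B) j0 = true).
  { intros k. apply (reached_later 0); auto. apply reached_spec. simpl. lra. }
  induction n as [|n IH].
  - assert (count_true I (fun _ => false) < count_true I (reached (0 * B)))%nat
      by (apply (count_true_strict _ _ _ j0); auto; discriminate).
    lia.
  - assert (Hmono : forall i, (i < I)%nat ->
                    reached (n * B) i = true -> reached (S n * B) i = true).
    { intros i Hi Hni. replace (S n * B)%nat with (n * B + B)%nat by lia.
      apply reached_later; auto. }
    destruct (Nat.lt_ge_cases (count_true I (reached (n * B))) I) as [Hlt|Hge].
    + destruct (count_true_lt _ _ Hlt) as [b [Hb Hnb]].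
      destruct (reach_exit_edge _ _ (reached (n * B)) j0 b
                  (windows_connected (n * B) j0 b j0_lt Hb) (Hj0 n) Hnb)
        as [j [i [Hj [Hi [Hnj [Hni [t [Ht Et]]]]]]]].
      assert (Hti : reached (S n * B) i = true).
      { replace (S n * B)%nat with (S t + (S n * B - S t))%nat by lia.
        apply reached_later; auto. apply (reached_edge t j); auto.
        replace t with (n * B + (t - n * B))%nat by lia. apply reached_later; auto. }
      assert (count_true I (reached (n * B)) < count_true I (reached (S n * B)))%nat
        by (apply (count_true_strict _ _ _ i); auto).
      lia.
    + assert (count_true I (reached (n * B)) <= count_true I (reached (S n * B)))%nat
        by (apply count_true_mono; auto).
      lia.
Qed.

Lemma propagate_all i : (i < I)%nat -> al ^ (I * B) * c 0 j0 <= c (I * B) i.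
Proof.
  intros Hi. apply reached_spec. apply (count_true_full I); [|exact Hi].
  pose proof (reached_count I). rewrite Nat.min_l in H by lia. exact H.
Qed.

End Propagation.

Section Averaging.
Variables (I : nat) (W : nat -> nat -> nat -> R).
Hypothesis W_ge0 : forall t i j, (i < I)%nat -> (j < I)%nat -> 0 <= W t i j.
Hypothesis W_row : forall t i, (i < I)%nat -> rsum I (fun j => W t i j) = 1.

(* Column [j0] of the product [W (k + n - 1) ... W k]. *)
Fixpoint prod_col (k j0 n i : nat) : R :=
  match n with
  | O => if Nat.eq_dec i j0 then 1 else 0
  | S n' => rsum I (fun j => W (k + n') i j * prod_col k j0 n' j)
  end.

Lemma prod_col_ge0 k j0 n i : (i < I)%nat -> 0 <= prod_col k j0 n i.
Proof.
  revert i; induction n as [|n IH]; intros i Hi; simpl.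
  - destruct (Nat.eq_dec i j0); lra.
  - apply rsum_nonneg. intros. apply Rmult_le_pos; auto.
Qed.

(* The value of [y k j0] keeps a share [prod_col k j0 n i] in [y (k + n) i],
   which pulls the latter below the upper bound [U] of [y k]. *)
Lemma averaging_upper_bound (y e : nat -> nat -> R) (g : nat -> R) (k j0 : nat) (U : R) :
  (forall t i, (i < I)%nat -> y (S t) i = rsum I (fun j => W t i j * y t j) + e t i) ->
  (forall t i, (i < I)%nat -> e t i <= g t) ->
  (forall i, (i < I)%nat -> y k i <= U) -> (j0 < I)%nat ->
  forall n i, (i < I)%nat ->
  y (k + n)%nat i <= U + rsum n (fun s => g (k + s)%nat) - prod_col k j0 n i * (U - y k j0).
Proof.
  intros y_succ e_le y_le Hj0 n. induction n as [|n IH]; intros i Hi; simpl.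
  - rewrite Nat.add_0_r. destruct (Nat.eq_dec i j0) as [->|]; [lra|].
    specialize (y_le i Hi). lra.
  - rewrite Nat.add_succ_r, y_succ by exact Hi.
    set (G := rsum n (fun s => g (k + s)%nat)). set (D := U - y k j0).
    assert (Havg : rsum I (fun j => W (k + n)%nat i j * y (k + n)%nat j) <=
                   rsum I (fun j => (U + G) * W (k + n)%nat i j
                                    + - D * (W (k + n)%nat i j * prod_col k j0 n j))).
    { apply rsum_le. intros j Hj.
      pose proof (IH j Hj). pose proof (W_ge0 (k + n) i j Hi Hj). fold G D in H. nra. }
    rewrite rsum_add, !rsum_scal, W_row in Havg by exact Hi.
    pose proof (e_le (k + n)%nat i Hi). nra.
Qed.

End Averaging.

Lemma contraction_iterate (D h : nat -> R) (T K : nat) (rho eps : R) :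
  0 <= rho < 1 -> 0 <= eps -> (forall k, D (k + T)%nat <= rho * D k + h k) ->
  (forall k, (K <= k)%nat -> h k <= eps) ->
  forall n, D (K + n * T)%nat <= rho ^ n * D K + eps / (1 - rho).
Proof.
  intros Hrho Heps Hstep Hh. induction n as [|n IH]; simpl.
  - rewrite Nat.add_0_r.
    assert (0 <= eps / (1 - rho)) by (apply Rmult_le_pos; [|apply Rlt_le, Rinv_0_lt_compat]; lra). lra.
  - replace (K + (T + n * T))%nat with (K + n * T + T)%nat by lia.
    eapply Rle_trans; [apply Hstep|]. pose proof (Hh (K + n * T)%nat ltac:(lia)).
    replace (rho * rho ^ n * D K + eps / (1 - rho))
      with (rho * (rho ^ n * D K + eps / (1 - rho)) + eps) by (field; lra).
    apply Rmult_le_compat_l with (r := rho) in IH; lra.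
Qed.

Lemma contraction_cv0 (D h : nat -> R) (T : nat) (rho : R) :
  (forall k, 0 <= D k) -> (0 < T)%nat -> 0 <= rho < 1 -> Un_cv h 0 ->
  (forall k, D (k + T)%nat <= rho * D k + h k) ->
  (forall k r, (r <= T)%nat -> D (k + r)%nat <= D k + h k) ->
  Un_cv D 0.
Proof.
  intros HD HT Hrho Hh Hstep Hgrow eps Heps.
  set (e := eps * (1 - rho) / 3).
  assert (He : 0 < e) by (unfold e; apply Rdiv_lt_0_compat; [apply Rmult_lt_0_compat|]; lra).
  assert (He3 : e <= eps / 3) by (unfold e; nra).
  destruct (Hh e He) as [K HK].
  assert (HhK : forall k, (K <= k)%nat -> h k <= e).
  { intros k Hk. specialize (HK k Hk). unfold R_dist in HK. rewrite Rminus_0_r in HK.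
    pose proof (Rle_abs (h k)). lra. }
  pose proof (contraction_iterate D h T K rho e Hrho (Rlt_le _ _ He) Hstep HhK) as Hiter.
  assert (Hq : 0 < eps / 3 / (D K + 1)) by (pose proof (HD K); apply Rdiv_lt_0_compat; lra).
  destruct (pow_lt_1_zero rho ltac:(rewrite Rabs_right; lra) _ Hq) as [N HN].
  exists (K + N * T)%nat. intros k Hk. unfold R_dist. rewrite Rminus_0_r, Rabs_right by (apply Rle_ge; auto).
  set (n := ((k - K) / T)%nat). set (r := ((k - K) mod T)%nat).
  assert (Hkr : (k - K = T * n + r)%nat) by (apply Nat.div_mod; lia).
  assert (Hr : (r < T)%nat) by (apply Nat.mod_upper_bound; lia).
  assert (Hn : (N <= n)%nat) by (apply Nat.div_le_lower_bound; nia).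
  replace k with (K + n * T + r)%nat by lia.
  eapply Rle_lt_trans; [apply Hgrow; lia|].
  pose proof (HhK (K + n * T)%nat ltac:(lia)). pose proof (Hiter n).
  specialize (HN n Hn). rewrite Rabs_right in HN by (apply Rle_ge, pow_le; lra).
  assert (rho ^ n * D K < eps / 3).
  { pose proof (HD K). pose proof (pow_le rho n ltac:(lra)).
    apply Rmult_lt_compat_r with (r := D K + 1) in HN; [|lra].
    replace (eps / 3 / (D K + 1) * (D K + 1)) with (eps / 3) in HN by (field; lra). nra. }
  replace (e / (1 - rho)) with (eps / 3) in * by (unfold e; field; lra).
  lra.
Qed.

Lemma rsum_sq_le_sq_rsum_abs m (v : nat -> R) :
  rsum m (fun c => v c * v c) <= rsum m (fun c => Rabs (v c)) * rsum m (fun c => Rabs (v c)).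
Proof.
  induction m as [|m IH]; simpl; [lra|].
  assert (0 <= rsum m (fun c => Rabs (v c))) by (apply rsum_nonneg; intros; apply Rabs_pos).
  pose proof (Rabs_pos (v m)). pose proof (Rsqr_abs (v m)) as Hsq. unfold Rsqr in Hsq. nra.
Qed.

Lemma vnorm_le_rsum_abs m v : vnorm m v <= rsum m (fun c => Rabs (v c)).
Proof.
  unfold vnorm. rewrite <- (sqrt_square (rsum m (fun c => Rabs (v c))))
    by (apply rsum_nonneg; intros; apply Rabs_pos).
  apply sqrt_le_1_alt, rsum_sq_le_sq_rsum_abs.
Qed.

Lemma Rabs_le_vnorm m v c : (c < m)%nat -> Rabs (v c) <= vnorm m v.
Proof.
  intros Hc. unfold vnorm. rewrite <- sqrt_Rsqr_abs. apply sqrt_le_1_alt.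
  apply (rsum_term_le m (fun c => v c * v c)); [intros; apply Rle_0_sqr|exact Hc].
Qed.

Lemma cv0_squeeze f g : (forall n, 0 <= f n <= g n) -> Un_cv g 0 -> Un_cv f 0.
Proof.
  intros Hfg Hg eps Heps. destruct (Hg eps Heps) as [N HN]. exists N. intros n Hn.
  specialize (HN n Hn). specialize (Hfg n). unfold R_dist in *. rewrite Rminus_0_r in *.
  rewrite Rabs_right in * by lra. lra.
Qed.

Lemma cv0_rsum n (F : nat -> nat -> R) :
  (forall j, (j < n)%nat -> Un_cv (F j) 0) -> Un_cv (fun k => rsum n (fun j => F j k)) 0.
Proof.
  induction n as [|n IH]; intros HF; simpl.
  - intros eps Heps. exists O. intros. unfold R_dist. rewrite Rminus_0_r, Rabs_R0. lra.
  - rewrite <- (Rplus_0_r 0). apply CV_plus; [apply IH; intros; apply HF|apply HF]; lia.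
Qed.

Lemma cv0_scal r f : Un_cv f 0 -> Un_cv (fun k => r * f k) 0.
Proof.
  intros Hf. rewrite <- (Rmult_0_r r). apply CV_mult; [|exact Hf].
  intros eps Heps. exists O. intros. unfold R_dist. rewrite Rminus_diag, Rabs_R0. lra.
Qed.

Lemma cv0_window_sum g T : Un_cv g 0 -> Un_cv (fun k => rsum T (fun s => g (k + s)%nat)) 0.
Proof.
  intros Hg. apply (cv0_rsum T (fun s k => g (k + s)%nat)). intros s _ eps Heps.
  destruct (Hg eps Heps) as [N HN]. exists N. intros n Hn. apply HN. lia.
Qed.

Section PerturbedConsensus.
Variables (I B : nat) (E : digraph_seq) (W : nat -> nat -> nat -> R) (al : R).
Hypothesis I_pos : (0 < I)%nat.
Hypothesis B_pos : (0 < B)%nat.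
Hypothesis windows_connected : forall k, strongly_connected I (window_union E B k).
Hypothesis al_pos : 0 < al.
Hypothesis W_ge0 : forall t i j, (i < I)%nat -> (j < I)%nat -> 0 <= W t i j.
Hypothesis W_row : forall t i, (i < I)%nat -> rsum I (fun j => W t i j) = 1.
Hypothesis W_diag : forall t i, (i < I)%nat -> al <= W t i i.
Hypothesis W_edge : forall t i j, (i < I)%nat -> (j < I)%nat -> E t j i -> al <= W t i j.

Lemma prod_col_lower_bound k j0 i :
  (j0 < I)%nat -> (i < I)%nat -> al ^ (I * B) <= prod_col I W k j0 (I * B) i.
Proof.
  intros Hj0 Hi.
  assert (Hstart : prod_col I W k j0 0 j0 = 1)
    by (simpl; destruct (Nat.eq_dec j0 j0); [reflexivity|congruence]).
  rewrite <- (Rmult_1_r (al ^ _)), <- Hstart.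
  apply (propagate_all I (fun t => E (k + t)%nat) (fun t => W (k + t)%nat)
           (prod_col I W k j0) al); auto.
  - lra.
  - intros; apply prod_col_ge0; auto.
  - intros n. apply window_union_shift, windows_connected.
Qed.

Variables (y e : nat -> nat -> R) (g : nat -> R).
Hypothesis y_succ : forall t i, (i < I)%nat -> y (S t) i = rsum I (fun j => W t i j * y t j) + e t i.
Hypothesis e_bound : forall t i, (i < I)%nat -> Rabs (e t i) <= g t.

Definition spread t := max_upto (I - 1) (y t) - min_upto (I - 1) (y t).

Lemma spread_ge0 t : 0 <= spread t.
Proof.
  unfold spread. pose proof (le_max_upto (I - 1) (y t) 0 ltac:(lia)).
  pose proof (min_upto_le (I - 1) (y t) 0 ltac:(lia)). lra.
Qed.

Lemma g_ge0 t : 0 <= g t.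
Proof. apply Rle_trans with (Rabs (e t 0)); [apply Rabs_pos|apply e_bound, I_pos]. Qed.

(* Each extreme value of [y (k + n)] is pulled towards the opposite extreme of
   [y k], with the share of that extreme in it. *)
Lemma spread_le_prod_col k n : exists j0 j1 i l,
  (j0 < I)%nat /\ (j1 < I)%nat /\ (i < I)%nat /\ (l < I)%nat /\
  spread (k + n) <= (1 - prod_col I W k j0 n i - prod_col I W k j1 n l) * spread k
                    + 2 * rsum n (fun s => g (k + s)%nat).
Proof.
  destruct (min_upto_attained (I - 1) (y k)) as [j0 [Hj0 Ej0]].
  destruct (max_upto_attained (I - 1) (y k)) as [j1 [Hj1 Ej1]].
  destruct (max_upto_attained (I - 1) (y (k + n)%nat)) as [i [Hi Ei]].
  destruct (min_upto_attained (I - 1) (y (k + n)%nat)) as [l [Hl El]].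
  exists j0, j1, i, l. repeat split; try lia.
  set (U := max_upto (I - 1) (y k)) in *. set (L := min_upto (I - 1) (y k)) in *.
  assert (Hup : y (k + n)%nat i <= U + rsum n (fun s => g (k + s)%nat)
                                  - prod_col I W k j0 n i * (U - y k j0)).
  { apply (averaging_upper_bound I W W_ge0 W_row y e); auto; try lia.
    - intros t i' Hi'. apply Rle_trans with (Rabs (e t i')); [apply Rle_abs|auto].
    - intros i' Hi'. apply le_max_upto. lia. }
  assert (Hlow : - y (k + n)%nat l <= - L + rsum n (fun s => g (k + s)%nat)
                                      - prod_col I W k j1 n l * (- L - - y k j1)).
  { apply (averaging_upper_bound I W W_ge0 W_row (fun t i => - y t i) (fun t i => - e t i));
      try lia.
    - intros t i' Hi'. rewrite y_succ, Ropp_plus_distr, <- rsum_opp by exact Hi'.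
      f_equal. apply rsum_ext. intros. ring.
    - intros t i' Hi'. apply Rle_trans with (Rabs (- e t i')); [apply Rle_abs|].
      rewrite Rabs_Ropp. auto.
    - intros i' Hi'. apply Ropp_le_contravar, min_upto_le. lia. }
  unfold spread. rewrite Ei, El. fold U L. rewrite <- Ej0 in Hup. rewrite <- Ej1 in Hlow.
  lra.
Qed.

Lemma spread_growth k r :
  spread (k + r) <= spread k + 2 * rsum r (fun s => g (k + s)%nat).
Proof.
  destruct (spread_le_prod_col k r) as [j0 [j1 [i [l [Hj0 [Hj1 [Hi [Hl Hs]]]]]]]].
  pose proof (prod_col_ge0 I W W_ge0 k j0 r i Hi).
  pose proof (prod_col_ge0 I W W_ge0 k j1 r l Hl). pose proof (spread_ge0 k). nra.
Qed.

Lemma spread_window_contraction k :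
  spread (k + I * B) <= (1 - 2 * al ^ (I * B)) * spread k
                        + 2 * rsum (I * B) (fun s => g (k + s)%nat).
Proof.
  destruct (spread_le_prod_col k (I * B)) as [j0 [j1 [i [l [Hj0 [Hj1 [Hi [Hl Hs]]]]]]]].
  pose proof (prod_col_lower_bound k j0 i Hj0 Hi).
  pose proof (prod_col_lower_bound k j1 l Hj1 Hl). pose proof (spread_ge0 k). nra.
Qed.

Lemma spread_cv0 : Un_cv g 0 -> Un_cv spread 0.
Proof.
  intros Hg. set (T := (I * B)%nat). set (rho := Rmax 0 (1 - 2 * al ^ T)).
  assert (Hdelta : 0 < al ^ T) by (apply pow_lt, al_pos).
  apply (contraction_cv0 spread (fun k => 2 * rsum T (fun s => g (k + s)%nat)) T rho).
  - exact spread_ge0.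
  - unfold T. nia.
  - split; [apply Rmax_l|apply Rmax_lub_lt; lra].
  - apply cv0_scal, cv0_window_sum, Hg.
  - intros k. eapply Rle_trans; [apply spread_window_contraction|].
    apply Rplus_le_compat_r, Rmult_le_compat_r; [apply spread_ge0|apply Rmax_r].
  - intros k r Hr. eapply Rle_trans; [apply spread_growth|].
    apply Rplus_le_compat_l, Rmult_le_compat_l; [lra|].
    apply rsum_le_prefix; [exact Hr|intros; apply g_ge0].
Qed.

End PerturbedConsensus.

Section TrackingProtocol.
Variables (I m : nat) (E : digraph_seq) (A : nat -> nat -> nat -> R) (kappa : R)
  (u : nat -> nat -> nat -> R) (phi : nat -> nat -> R) (x : nat -> nat -> nat -> R).
Hypothesis Hkappa : 0 < kappa.
Hypothesis Hcomp : forall k, compliant I kappa E A k.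
Hypothesis Hstoch : forall k, column_stochastic I A k.
Hypothesis Hphi0 : forall i, (i < I)%nat -> phi i 0%nat = 1.
Hypothesis Hx0 : forall i c, (i < I)%nat -> (c < m)%nat -> x i 0%nat c = u i 0%nat c.
Hypothesis Hphi : forall i k, (i < I)%nat -> phi i (S k) = rsum I (fun j => A k i j * phi j k).
Hypothesis Hx : forall i k c, (i < I)%nat -> (c < m)%nat ->
  x i (S k) c = / phi i (S k) * rsum I (fun j => A k i j * phi j k * x j k c)
                + / phi i (S k) * (u i (S k) c - u i k c).

Lemma A_ge0 k i j : (i < I)%nat -> (j < I)%nat -> 0 <= A k i j.
Proof. apply (Hstoch k). Qed.

Lemma A_diag k i : (i < I)%nat -> kappa <= A k i i.
Proof. intros Hi. apply Rge_le, (Hcomp k), Hi. Qed.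

Lemma A_edge k i j : (i < I)%nat -> (j < I)%nat -> E k j i -> kappa <= A k i j.
Proof. intros Hi Hj Hji. apply Rge_le, (Hcomp k); assumption. Qed.

Lemma A_col k j : (j < I)%nat -> rsum I (fun i => A k i j) = 1.
Proof. apply (Hstoch k). Qed.

Lemma rsum_A_mul k (f : nat -> R) :
  rsum I (fun i => rsum I (fun j => A k i j * f j)) = rsum I f.
Proof.
  rewrite rsum_swap. apply rsum_ext. intros j Hj.
  rewrite (rsum_ext _ _ (fun i => f j * A k i j)) by (intros; ring).
  rewrite rsum_scal, A_col by exact Hj. ring.
Qed.

Lemma phi_pos k i : (i < I)%nat -> 0 < phi i k.
Proof.
  revert i; induction k as [|k IH]; intros i Hi; [rewrite Hphi0 by exact Hi; lra|].
  rewrite Hphi by exact Hi.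
  apply Rlt_le_trans with (A k i i * phi i k).
  - apply Rmult_lt_0_compat; [pose proof (A_diag k i Hi); lra|auto].
  - apply (rsum_term_le I (fun j => A k i j * phi j k)); [|exact Hi].
    intros j Hj. apply Rmult_le_pos; [apply A_ge0|apply Rlt_le, IH]; assumption.
Qed.

Lemma phi_total k : rsum I (fun i => phi i k) = INR I.
Proof.
  induction k as [|k IH].
  - rewrite (rsum_ext _ _ (fun _ => 1)) by auto. rewrite rsum_const. ring.
  - rewrite (rsum_ext _ _ (fun i => rsum I (fun j => A k i j * phi j k))) by auto.
    rewrite rsum_A_mul. exact IH.
Qed.

Lemma mass_conservation k c : (c < m)%nat ->
  rsum I (fun i => phi i k * x i k c) = rsum I (fun i => u i k c).
Proof.
  intros Hc. induction k as [|k IH].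
  - apply rsum_ext. intros i Hi. rewrite Hphi0, Hx0 by assumption. ring.
  - rewrite (rsum_ext _ _ (fun i => rsum I (fun j => A k i j * (phi j k * x j k c))
                                    + (u i (S k) c + - u i k c))).
    + rewrite rsum_add, rsum_A_mul, IH, rsum_add, rsum_opp. ring.
    + intros i Hi. rewrite Hx by assumption.
      rewrite (rsum_ext _ (fun j => A k i j * (phi j k * x j k c))
                 (fun j => A k i j * phi j k * x j k c)) by (intros; ring).
      pose proof (phi_pos (S k) i Hi). field. lra.
Qed.

Lemma phi_ge_kappa_pow k i : (i < I)%nat -> kappa ^ k <= phi i k.
Proof.
  intros Hi. apply Rle_trans with (kappa ^ k * phi i 0%nat); [rewrite Hphi0 by exact Hi; lra|].
  apply (propagate_stay I E A (fun t j => phi j t) kappa); auto using A_ge0, A_diag, A_edge.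
  - lra.
  - intros; apply Rlt_le, phi_pos; assumption.
Qed.

Variable B : nat.
Hypothesis I_pos : (0 < I)%nat.
Hypothesis B_pos : (0 < B)%nat.
Hypothesis windows_connected : forall k, strongly_connected I (window_union E B k).

Lemma kappa_le_1 : kappa <= 1.
Proof.
  rewrite <- (A_col 0 0 I_pos). apply Rle_trans with (A 0 0 0); [apply A_diag, I_pos|].
  apply (rsum_term_le I (fun i => A 0 i 0)); [intros; apply A_ge0|]; lia.
Qed.

Lemma exists_phi_ge_1 k : exists j, (j < I)%nat /\ 1 <= phi j k.
Proof.
  destruct (max_upto_attained (I - 1) (fun j => phi j k)) as [j [Hj Ej]].
  exists j. split; [lia|].
  assert (Hsum : INR I <= INR I * phi j k).
  { rewrite <- rsum_const, <- (phi_total k). apply rsum_le. intros i Hi.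
    rewrite <- Ej. apply (le_max_upto (I - 1) (fun j => phi j k)). lia. }
  assert (0 < INR I) by (apply lt_0_INR, I_pos). nra.
Qed.

Definition eta := kappa ^ (I * B).

Lemma eta_pos : 0 < eta.
Proof. apply pow_lt, Hkappa. Qed.

(* Before time [I * B] the mass of node [i] decays at most geometrically; after
   it, mass [1] somewhere [I * B] steps earlier has spread to every node. *)
Lemma phi_lower_bound k i : (i < I)%nat -> eta <= phi i k.
Proof.
  intros Hi. unfold eta. destruct (Nat.lt_ge_cases k (I * B)) as [Hk|Hk].
  - apply Rle_trans with (kappa ^ k); [|apply phi_ge_kappa_pow, Hi].
    replace (I * B)%nat with (k + (I * B - k))%nat by lia. rewrite pow_add.
    assert (kappa ^ (I * B - k) <= 1).
    { rewrite <- (pow1 (I * B - k)). apply pow_incr. pose proof kappa_le_1. lra. }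
    pose proof (pow_le kappa k ltac:(lra)). nra.
  - set (k0 := (k - I * B)%nat). replace k with (k0 + I * B)%nat by lia.
    destruct (exists_phi_ge_1 k0) as [j0 [Hj0 Hphij0]].
    apply Rle_trans with (kappa ^ (I * B) * phi j0 (k0 + 0)%nat).
    + rewrite Nat.add_0_r. pose proof (pow_le kappa (I * B) ltac:(lra)). nra.
    + apply (propagate_all I (fun t => E (k0 + t)%nat) (fun t => A (k0 + t)%nat)
               (fun t j => phi j (k0 + t)%nat) kappa); auto using A_ge0, A_diag, A_edge.
      * lra.
      * intros; apply Rlt_le, phi_pos; assumption.
      * intros t j Hj. rewrite Nat.add_succ_r. apply Hphi, Hj.
      * intros n. apply window_union_shift, windows_connected.
Qed.

Lemma phi_le_I k i : (i < I)%nat -> phi i k <= INR I.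
Proof.
  intros Hi. rewrite <- (phi_total k).
  apply (rsum_term_le I (fun i => phi i k)); [intros; apply Rlt_le, phi_pos|]; assumption.
Qed.

Definition protocol_weight t i j := A t i j * phi j t / phi i (S t).
Definition tracking_error c t i := (u i (S t) c - u i t c) / phi i (S t).
Definition error_bound t := / eta * rsum I (fun i => vnorm m (fun c => u i (S t) c - u i t c)).

Lemma x_succ c t i : (i < I)%nat -> (c < m)%nat ->
  x i (S t) c = rsum I (fun j => protocol_weight t i j * x j t c) + tracking_error c t i.
Proof.
  intros Hi Hc. rewrite Hx by assumption. unfold protocol_weight, tracking_error, Rdiv.
  rewrite (rsum_ext _ (fun j => A t i j * phi j t * / phi i (S t) * x j t c)
             (fun j => / phi i (S t) * (A t i j * phi j t * x j t c))) by (intros; ring).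
  rewrite rsum_scal. ring.
Qed.

Lemma protocol_weight_ge0 t i j : (i < I)%nat -> (j < I)%nat -> 0 <= protocol_weight t i j.
Proof.
  intros Hi Hj. unfold protocol_weight, Rdiv.
  pose proof (A_ge0 t i j Hi Hj). pose proof (phi_pos t j Hj).
  pose proof (Rinv_0_lt_compat _ (phi_pos (S t) i Hi)).
  apply Rmult_le_pos; [apply Rmult_le_pos|]; lra.
Qed.

Lemma protocol_weight_row t i : (i < I)%nat -> rsum I (fun j => protocol_weight t i j) = 1.
Proof.
  intros Hi. unfold protocol_weight, Rdiv.
  rewrite (rsum_ext _ _ (fun j => / phi i (S t) * (A t i j * phi j t))) by (intros; ring).
  rewrite rsum_scal, <- Hphi by exact Hi. pose proof (phi_pos (S t) i Hi). field. lra.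
Qed.

Lemma protocol_weight_lower_bound t i j : (i < I)%nat -> (j < I)%nat ->
  kappa <= A t i j -> kappa * eta / INR I <= protocol_weight t i j.
Proof.
  intros Hi Hj Ha. unfold protocol_weight, Rdiv.
  pose proof (phi_lower_bound t j Hj). pose proof eta_pos.
  pose proof (phi_le_I (S t) i Hi). pose proof (phi_pos (S t) i Hi).
  apply Rmult_le_compat; [nra|apply Rlt_le, Rinv_0_lt_compat, lt_0_INR, I_pos|nra|].
  apply Rinv_le_contravar; assumption.
Qed.

Lemma tracking_error_bound c t i : (i < I)%nat -> (c < m)%nat ->
  Rabs (tracking_error c t i) <= error_bound t.
Proof.
  intros Hi Hc. unfold tracking_error, error_bound, Rdiv.
  pose proof (phi_lower_bound (S t) i Hi). pose proof eta_pos.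
  rewrite Rabs_mult, (Rabs_right (/ _)), Rmult_comm
    by (apply Rle_ge, Rlt_le, Rinv_0_lt_compat; lra).
  apply Rmult_le_compat; [apply Rlt_le, Rinv_0_lt_compat; lra|apply Rabs_pos| |].
  - apply Rinv_le_contravar; assumption.
  - eapply Rle_trans; [apply (Rabs_le_vnorm m (fun c => u i (S t) c - u i t c) c Hc)|].
    apply (rsum_term_le I (fun i => vnorm m (fun c => u i (S t) c - u i t c))); [|exact Hi].
    intros; apply sqrt_pos.
Qed.

Lemma x_near_average k c i : (i < I)%nat -> (c < m)%nat ->
  Rabs (x i k c - / INR I * rsum I (fun j => u j k c))
  <= spread I (fun t j => x j t c) k.
Proof.
  intros Hi Hc. unfold spread.
  set (U := max_upto (I - 1) (fun j => x j k c)). set (L := min_upto (I - 1) (fun j => x j k c)).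
  assert (Hbetween : forall j, (j < I)%nat -> L <= x j k c <= U)
    by (intros j Hj; split; [apply (min_upto_le (I - 1) (fun j => x j k c))
                            |apply (le_max_upto (I - 1) (fun j => x j k c))]; lia).
  rewrite <- mass_conservation, <- (phi_total k) by exact Hc.
  pose proof (weighted_average_between I (fun j => phi j k) (fun j => x j k c) L U)
    as Havg.
  pose proof (Hbetween i Hi).
  apply Rabs_le. apply Havg in Hbetween.
  - lra.
  - rewrite phi_total. apply lt_0_INR, I_pos.
  - intros; apply Rlt_le, phi_pos; assumption.
Qed.

Lemma tracking :
  (forall i, (i < I)%nat -> Un_cv (fun k => vnorm m (fun c => u i (S k) c - u i k c)) 0) ->
  forall i, (i < I)%nat ->
  Un_cv (fun k => vnorm m (fun c => x i k c - / INR I * rsum I (fun j => u j k c))) 0.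
Proof.
  intros Hu i Hi.
  assert (Herr : Un_cv error_bound 0).
  { apply cv0_scal, (cv0_rsum I (fun j k => vnorm m (fun c => u j (S k) c - u j k c))), Hu. }
  apply cv0_squeeze with (fun k => rsum m (fun c => spread I (fun t j => x j t c) k)).
  - intros k. split; [apply sqrt_pos|].
    eapply Rle_trans; [apply vnorm_le_rsum_abs|].
    apply rsum_le. intros c Hc. apply x_near_average; assumption.
  - apply (cv0_rsum m (fun c => spread I (fun t j => x j t c))). intros c Hc.
    apply (spread_cv0 I B E protocol_weight (kappa * eta / INR I) I_pos B_pos windows_connected)
      with (e := tracking_error c) (g := error_bound); auto.
    + pose proof eta_pos. pose proof (lt_0_INR I I_pos).
      apply Rdiv_lt_0_compat; [apply Rmult_lt_0_compat|]; assumption.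
    + exact protocol_weight_ge0.
    + exact protocol_weight_row.
    + intros; apply protocol_weight_lower_bound, A_diag; assumption.
    + intros; apply protocol_weight_lower_bound; [| |apply A_edge]; assumption.
    + intros t j Hj. apply x_succ; assumption.
    + intros t j Hj. apply tracking_error_bound; assumption.
Qed.

End TrackingProtocol.

Theorem mainTheorem13
  (I m : nat) (E : digraph_seq) (A : nat -> nat -> nat -> R) (kappa : R)
  (u : nat -> nat -> nat -> R)
  (phi : nat -> nat -> R) (x : nat -> nat -> nat -> R)
  (Hkappa : 0 < kappa)
  (HB : B_strongly_connected I E)
  (Hcomp : forall k, compliant I kappa E A k)
  (Hstoch : forall k, column_stochastic I A k)
  (Hphi0 : forall i, (i < I)%nat -> phi i 0%nat = 1)
  (Hx0 : forall i c, (i < I)%nat -> (c < m)%nat -> x i 0%nat c = u i 0%nat c)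
  (Hphi : forall i k, (i < I)%nat ->
     phi i (S k) = rsum I (fun j => A k i j * phi j k))
  (Hx : forall i k c, (i < I)%nat -> (c < m)%nat ->
     x i (S k) c =
       / phi i (S k) * rsum I (fun j => A k i j * phi j k * x j k c)
       + / phi i (S k) * (u i (S k) c - u i k c)) :
  (forall k c, (c < m)%nat ->
     rsum I (fun i => phi i k * x i k c) = rsum I (fun i => u i k c)) /\
  ((forall i, (i < I)%nat ->
      Un_cv (fun k => vnorm m (fun c => u i (S k) c - u i k c)) 0) ->
   forall i, (i < I)%nat ->
      Un_cv (fun k => vnorm m (fun c => x i k c - / INR I * rsum I (fun j => u j k c))) 0).
Proof.
  split.
  - intros k c Hc. apply (mass_conservation I m E A kappa); assumption.
  - intros Hu i Hi. destruct HB as [B [HBpos Hwindows]].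
    exact (tracking I m E A kappa u phi x Hkappa Hcomp Hstoch Hphi0 Hx0 Hphi Hx B
             ltac:(lia) HBpos Hwindows Hu i Hi).
Qed.
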